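(* Fix integers $s,b\ge1$ and let $\{a_i\}$ be the $(s,b)$-Generacci sequence. For $n\ge1$ let $P_n(g)$ be the fraction, among all bin gaps occurring in the $(s,b)$-Generacci legal decompositions of all integers $m\in[a_{(n-1)b+1},a_{nb+1})$, of those bin gaps equal to $g$. Then the limit $P(g):=\lim_{n\to\infty}P_n(g)$ exists, $P(g)=0$ for $g<s+1$, and \[P(g)=b\,(\lambda_1^b)^{-g}\qquad (g\ge s+1),\] where $\lambda_1$ is the largest root of $x^{(s+1)b}-x^{sb}-b=0$.
   Context: Fix integers $s,b\ge1$. For an increasing sequence of positive integers $\{a_i\}_{i\ge1}$ define bins $\mathcal{B}_n=\{a_{b(n-1)+1},\dots,a_{bn}\}$ for $n\ge1$, with $\mathcal{B}_j=\emptyset$ for $j\le 0$. A decomposition $m=a_{\ell_1}+\dots+a_{\ell_k}$ with $a_{\ell_1}>\dots>a_{\ell_k}$ is an $(s,b)$-Generacci legal decomposition if $\{a_{\ell_i},a_{\ell_{i+1}}\}\not\subset\mathcal{B}_{j-s}\cup\dots\cup\mathcal{B}_j$ for all $i,j$. The $(s,b)$-Generacci sequence is the increasing sequence in which every $a_i$ is the smallest positive integer with no legal decomposition using $a_1,\dots,a_{i-1}$; every positive integer has a unique legal decomposition. For $m$ with legal decomposition $m=a_{\ell_1}+\dots+a_{\ell_k}$, $\ell_1>\dots>\ell_k$ (so $a_{\ell_i}\in\mathcal{B}_{\lceil \ell_i/b\rceil}$), the bin gaps of $m$ are the $k-1$ numbers $\lceil \ell_i/b\rceil-\lceil \ell_{i+1}/b\rceil$,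 $1\le i\le k-1$. *)

From HB Require Import structures.
From mathcomp Require Import all_boot all_order all_algebra.
From mathcomp Require Import all_classical all_reals all_analysis.
Set Implicit Arguments. Unset Strict Implicit. Unset Printing Implicit Defensive.
Import Order.TTheory GRing.Theory Num.Theory.

(* Sequences a : nat -> nat are indexed from 1 (a 0 is unused).
   Index l lies in bin B_n with n = ceil(l / b). *)
Definition bin (b l : nat) : nat := (l + b.-1) %/ b.

(* index l lies in B_{j-s} u ... u B_j (bins with index <= 0 are empty,
   and bin b l >= 1 for l >= 1, so truncated subtraction is harmless) *)
Definition in_window (s b j l : nat) : Prop := j - s <= bin b l <= j.

(* ls = [:: l_1; ...; l_k] is the list of indices of a legal decomposition:
   strictly decreasing positive indices, and no two consecutive summands lie
   together in a window of s+1 consecutive bins. *)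
Definition legal (s b : nat) (ls : seq nat) : Prop :=
  sorted gtn ls /\ all (fun l => 0 < l) ls /\
  forall i, i.+1 < size ls ->
    ~ (exists j, in_window s b j (nth 0 ls i) /\ in_window s b j (nth 0 ls i.+1)).

Definition legal_decomp (s b : nat) (a : nat -> nat) (ls : seq nat) (m : nat) : Prop :=
  legal s b ls /\ \sum_(l <- ls) a l = m.

Definition decomposable_below (s b : nat) (a : nat -> nat) (i m : nat) : Prop :=
  exists ls, legal_decomp s b a ls m /\ all (fun l => l < i) ls.

Definition is_generacci (s b : nat) (a : nat -> nat) : Prop :=
  (forall i j, 1 <= i -> i < j -> a i < a j) /\
  (forall i, 1 <= i ->
     [/\ 0 < a i,
         ~ decomposable_below s b a i (a i)
       & forall m, 0 < m < a i -> decomposable_below s b a i m]).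

Definition bin_gaps (b : nat) (ls : seq nat) : seq nat :=
  match ls with
  | [::] => [::]
  | x :: t => pairmap (fun p q => bin b p - bin b q) x t
  end.

Local Open Scope ring_scope.

Definition Pn (R : realType) (b : nat) (a : nat -> nat) (dec : nat -> seq nat)
    (g n : nat) : R :=
  (\sum_(a ((n.-1) * b).+1 <= m < a (n * b).+1) count_mem g (bin_gaps b (dec m)))%N%:R
  / (\sum_(a ((n.-1) * b).+1 <= m < a (n * b).+1) size (bin_gaps b (dec m)))%N%:R.

From HB Require Import structures.
From mathcomp Require Import all_boot all_order all_algebra.
From mathcomp Require Import all_classical all_reals all_analysis.
From mathcomp Require Import ring lra zify.
Import Order.TTheory GRing.Theory Num.Theory.
Import numFieldNormedType.Exports.

Set Implicit Arguments. Unset Strict Implicit. Unset Printing Implicit Defensive.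

(* Since a_{i+1} = a_i + a_{t(i)}, where t(i) is the first index of the bin s
   bins below that of i, the legal decompositions of the m in [a_i, a_{i+1})
   are a_i followed by the decompositions of m - a_i < a_{t(i)}.  Counting bin
   gaps along this recursion, C_k = a_{bk+1} and the number W_{k-g} of gaps
   equal to g > s below a_{bk+1} satisfy C_{k+1} = C_k + b C_{k-s} and
   W_{n+1} = W_n + b W_{n-s} + b^2 C_{n-s}, whence
   P_{k+1}(g) = (W_{k+1-g} - W_{k-g}) / W_{k-s} (and 0 for g <= s).
   With rho = lambda_1^b, the largest root of rho^{s+1} = rho^s + b, and
   p = 1/rho, the sequence C_k / rho^k satisfies the averaging recurrence
   x_{j+s+1} = p x_{j+s} + (1 - p) x_j, whose oscillation contracts, so it
   converges to a positive limit; the same recurrence with a forcing term that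
   converges, together with Cesaro averaging, gives W_k ~ K k rho^k with K > 0.
   Hence W_{J+1} / W_J -> rho and P(g) = (rho - 1) / rho^{g-s} = b rho^{-g}. *)

(** * Delayed linear recurrences *)

(* [n - s] is not a structural subterm of [n.+1], so the recursion runs on a
   fuel argument; any fuel [>= n] gives the same value. *)
Fixpoint lag_rec_fuel (s b x0 : nat) (h : nat -> nat) (fuel n : nat) : nat :=
  if fuel is f.+1 then
    if n is n'.+1 then
      lag_rec_fuel s b x0 h f n' + b * lag_rec_fuel s b x0 h f (n' - s) + h n'
    else x0
  else x0.

Definition lag_rec s b x0 h n := lag_rec_fuel s b x0 h n n.

Section LagRec.
Variables (s b x0 : nat) (h : nat -> nat).

Lemma lag_rec_fuel_irr f1 f2 n : n <= f1 -> n <= f2 ->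
  lag_rec_fuel s b x0 h f1 n = lag_rec_fuel s b x0 h f2 n.
Proof.
elim: f1 f2 n => [|f1 IH] [|f2] [|n] //= n_f1 n_f2.
by rewrite (IH f2 n) ?(IH f2 (n - s)) //; lia.
Qed.

Lemma lag_recS n :
  lag_rec s b x0 h n.+1 = lag_rec s b x0 h n + b * lag_rec s b x0 h (n - s) + h n.
Proof. by rewrite /lag_rec /= (@lag_rec_fuel_irr _ (n - s) (n - s)) //; lia. Qed.

Lemma lag_rec_mono : {homo lag_rec s b x0 h : m n / m <= n}.
Proof. by apply: (homo_leq leqnn leq_trans) => n; rewrite lag_recS -addnA leq_addr. Qed.

End LagRec.

(* [Cseq s b k = a_{bk+1}], and for every gap size [g > s], [Wseq s b n] is the
   number of bin gaps equal to [g] in the decompositions of all [m < a_{b(n+g)+1}]. *)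
Definition Cseq s b := lag_rec s b 1 (fun=> 0).
Definition Wseq s b := lag_rec s b 0 (fun n => b * b * Cseq s b (n - s)).

Lemma CseqS s b n : Cseq s b n.+1 = Cseq s b n + b * Cseq s b (n - s).
Proof. by rewrite /Cseq lag_recS addn0. Qed.

Lemma Cseq_mono s b : {homo Cseq s b : m n / m <= n}.
Proof. exact: lag_rec_mono. Qed.

Lemma Cseq_gt0 s b n : 0 < Cseq s b n.
Proof. exact: (Cseq_mono _ _ (leq0n n)). Qed.

Lemma Wseq0 s b : Wseq s b 0 = 0.
Proof. by []. Qed.

Lemma WseqS s b n :
  Wseq s b n.+1 = Wseq s b n + b * Wseq s b (n - s) + b * b * Cseq s b (n - s).
Proof. exact: lag_recS. Qed.

Lemma Wseq_mono s b : {homo Wseq s b : m n / m <= n}.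
Proof. exact: lag_rec_mono. Qed.

Lemma Wseq_gt0 s b n : 0 < b -> 0 < n -> 0 < Wseq s b n.
Proof.
move=> b_gt0 n_gt0; apply: leq_trans (lag_rec_mono _ _ _ _ n_gt0).
by rewrite -/(Wseq s b 1) WseqS addn_gt0 !muln_gt0 b_gt0 Cseq_gt0 orbT.
Qed.

(** * Bins, legal decompositions and the Generacci recursion *)

Section Generacci.
Variables (s b : nat).
Hypothesis b_gt0 : 0 < b.

Lemma leq_bin x y : x <= y -> bin b x <= bin b y.
Proof. by move=> le_xy; rewrite /bin leq_div2r // leq_add2r. Qed.

Lemma bin_leq y k : (bin b y <= k) = (y <= b * k).
Proof. by rewrite /bin -ltnS ltn_divLR //; move: b_gt0; lia. Qed.

Lemma bin_gt0 y : 0 < y -> 0 < bin b y.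
Proof. by move=> y_gt0; rewrite ltnNge bin_leq muln0 -ltnNge. Qed.

Lemma bin_block k r : r < b -> bin b (b * k + 1 + r) = k.+1.
Proof. by move=> lt_rb; apply/eqP; rewrite eqn_leq bin_leq ltnNge bin_leq mulnS; lia. Qed.

Definition far x y := bin b y + s < bin b x.

Definition legalb L := sorted far L && all (fun l => 0 < l) L.

Lemma far_ltn x y : far x y -> y < x.
Proof. by rewrite /far => lt_bin; rewrite ltnNge; apply/negP => /leq_bin; lia. Qed.

Lemma far_trans : transitive far.
Proof. by move=> y x z; rewrite /far; lia. Qed.

Lemma common_windowP x y : y < x ->
  (exists j, in_window s b j x /\ in_window s b j y) <-> ~~ far x y.
Proof.
move=> /ltnW/leq_bin le_bin; rewrite /far /in_window; split.
  by move=> [j [/andP [? ?] /andP [? ?]]]; lia.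
by move=> ?; exists (bin b x); lia.
Qed.

Lemma legalP L : legal s b L <-> legalb L.
Proof.
rewrite /legal /legalb; split.
  move=> [L_sorted [L_pos L_win]]; rewrite L_pos andbT; apply/(sortedP 0) => i lt_iL.
  have lt_next : nth 0 L i.+1 < nth 0 L i by move/(sortedP 0): L_sorted => /(_ i lt_iL).
  by apply/negPn/negP => /(common_windowP lt_next); apply: L_win.
move=> /andP [L_sorted L_pos]; split; first by apply: sub_sorted L_sorted => x y /far_ltn.
split=> // i lt_iL.
have far_next : far (nth 0 L i) (nth 0 L i.+1) by move/(sortedP 0): L_sorted => /(_ i lt_iL).
by move/(common_windowP (far_ltn far_next)); rewrite far_next.
Qed.

(* First index of the bin [B_{j-s}], where [j] is the bin of [i]
   (or [1] when [j <= s]); the summands allowed after [a_i] are those below it. *)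
Definition window_start i := b * (bin b i - s.+1) + 1.

Lemma window_start_gt0 i : 0 < window_start i.
Proof. by rewrite /window_start addn1. Qed.

Lemma ltn_window_start x l : 0 < l -> (l < window_start x) = far x l.
Proof. by move=> /bin_gt0 l_bin; rewrite /far /window_start addn1 ltnS -bin_leq; lia. Qed.

Lemma window_start_leq x : 0 < x -> window_start x <= x.
Proof.
move=> x_gt0; have := bin_gt0 x_gt0; have := bin_leq x (bin b x).-1.
have : b * (bin b x - s.+1) <= b * (bin b x).-1 by rewrite leq_mul2l; lia.
by rewrite /window_start; lia.
Qed.

Lemma window_start_block k r : r < b -> window_start (b * k + 1 + r) = b * (k - s) + 1.
Proof. by move=> lt_rb; rewrite /window_start bin_block. Qed.

Definition below i L := all (fun l => l < i) L.

Lemma below_trans i j L : i <= j -> below i L -> below j L.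
Proof. by move=> le_ij; apply: sub_all => l /leq_trans; apply. Qed.

Lemma legalb_cons x L : legalb (x :: L) = [&& 0 < x, legalb L & below (window_start x) L].
Proof.
rewrite /legalb /= (path_sortedE far_trans).
have [x_gt0 | _] := ltnP 0 x; last by rewrite !andbF.
have [L_pos | _] := boolP (all (fun l => 0 < l) L); last by rewrite !andbF.
have -> : all (far x) L = below (window_start x) L.
  by apply: eq_in_all => l l_in; rewrite ltn_window_start //; apply: (allP L_pos).
by rewrite !andbT andbC.
Qed.

Lemma legalb_consP x L :
  reflect [/\ 0 < x, legalb L & below (window_start x) L] (legalb (x :: L)).
Proof. by rewrite legalb_cons; apply: and3P. Qed.

Lemma below_cons x L : legalb (x :: L) -> below x.+1 (x :: L).
Proof.
case/legalb_consP=> x_gt0 _ L_below; rewrite /below /= ltnSn.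
by apply: below_trans L_below; have := window_start_leq x_gt0; lia.
Qed.

Variable a : nat -> nat.

Definition sum_a L := \sum_(l <- L) a l.

Lemma sum_a_nil : sum_a [::] = 0.
Proof. exact: big_nil. Qed.

Lemma sum_a_cons x L : sum_a (x :: L) = a x + sum_a L.
Proof. exact: big_cons. Qed.

Hypothesis a_gen : is_generacci s b a.

Lemma gen_lt i j : 0 < i -> i < j -> a i < a j.
Proof. by case: a_gen => a_incr _; apply: a_incr. Qed.

Lemma gen_leq i j : 0 < i -> i <= j -> a i <= a j.
Proof. by move=> i_gt0; rewrite leq_eqVlt => /predU1P [-> // | /(gen_lt i_gt0) /ltnW]. Qed.

Lemma gen_gt0 i : 0 < i -> 0 < a i.
Proof. by case: a_gen => _ a_min i_gt0; case: (a_min i i_gt0). Qed.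

Lemma decomposable_belowP i m : decomposable_below s b a i m <->
  exists L, [/\ legalb L, below i L & sum_a L = m].
Proof.
split; first by move=> [L [[/legalP L_legal L_sum] L_below]]; exists L; split.
by move=> [L [L_legal L_below L_sum]]; exists L; split=> //; split=> //; apply/legalP.
Qed.

Lemma gen_undecomposable i : 0 < i ->
  ~ exists L, [/\ legalb L, below i L & sum_a L = a i].
Proof. by case: a_gen => _ a_min i_gt0; case: (a_min i i_gt0) => _ /decomposable_belowP. Qed.

Lemma gen_decomposable i m : 0 < i -> 0 < m < a i ->
  exists L, [/\ legalb L, below i L & sum_a L = m].
Proof. by case: a_gen => _ a_min i_gt0 m_bd; case: (a_min i i_gt0) => _ _ /(_ m m_bd)/decomposable_belowP. Qed.

Lemma gen1 : a 1 = 1.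
Proof.
have a1_gt0 := gen_gt0 (ltnSn 0).
have [lt_1a1 | ] := ltnP 1 (a 1); last by lia.
have [[|x L] [L_legal L_below L_sum]] := gen_decomposable (ltnSn 0) (m := 1) lt_1a1.
  by rewrite sum_a_nil in L_sum.
by move: L_legal L_below => /legalb_consP [x_gt0 _ _] /andP []; lia.
Qed.

(* [gen_rec] below is proved by strong induction on [i]; [rec_upto i] is the
   induction hypothesis, under which the next two lemmas hold below [i]. *)
Definition rec_upto i := forall j, 0 < j < i -> a j.+1 = a j + a (window_start j).

Lemma rec_upto_window_start i : 0 < i -> rec_upto i -> rec_upto (window_start i).
Proof. by move=> i_gt0 a_rec j j_bd; apply: a_rec; have := window_start_leq i_gt0; lia. Qed.

Lemma legal_sum_lt_rec i : 0 < i -> rec_upto i ->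
  forall L, legalb L -> below i L -> sum_a L < a i.
Proof.
elim/ltn_ind: i => i IH i_gt0 a_rec [|x L]; first by rewrite sum_a_nil gen_gt0.
move=> /legalb_consP [x_gt0 L_legal L_below] /andP [lt_xi _].
have le_tx := window_start_leq x_gt0.
have : sum_a L < a (window_start x).
  apply: IH => //; [lia | exact: window_start_gt0 | move=> j j_bd; apply: a_rec; lia].
have := a_rec x (ltac:(lia)); have := gen_leq (ltn0Sn x) lt_xi.
by rewrite sum_a_cons; lia.
Qed.

Lemma legal_decomp_rec i : 0 < i -> rec_upto i ->
  forall m, m < a i -> exists L, [/\ legalb L, below i L & sum_a L = m].
Proof.
elim/ltn_ind: i => -[// | [|j]] IH _ a_rec m lt_ma.
  by exists [::]; split=> //; move: lt_ma; rewrite gen1 sum_a_nil; lia.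
rewrite (a_rec j.+1) ?ltnSn // in lt_ma.
have [lt_maj | le_ajm] := ltnP m (a j.+1).
  have [L [L_legal L_below L_sum]] :=
    IH j.+1 (ltnSn _) (ltn0Sn _) (fun k k_bd => a_rec k ltac:(lia)) m lt_maj.
  by exists L; split=> //; apply: below_trans L_below.
have le_tj := window_start_leq (ltn0Sn j).
have [L [L_legal L_below L_sum]] := IH (window_start j.+1) ltac:(lia) (window_start_gt0 _)
  (fun k k_bd => a_rec k ltac:(lia)) (m - a j.+1) ltac:(lia).
have jL_legal : legalb (j.+1 :: L) by apply/legalb_consP.
by exists (j.+1 :: L); split; [ | exact: below_cons | rewrite sum_a_cons L_sum; lia].
Qed.

(* Otherwise [a_i + a_t] would have a legal decomposition below [i+1], but
   all such sums are smaller than [a_i + a_t]. *)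
Lemma gen_succ_leq i : 0 < i -> rec_upto i -> a i.+1 <= a i + a (window_start i).
Proof.
move=> i_gt0 a_rec; rewrite leqNgt; apply/negP => lt_sum.
have a_pos := gen_gt0 i_gt0.
have [[|x L] [L_legal L_below L_sum]] :=
  gen_decomposable (ltn0Sn i) (m := a i + a (window_start i)) ltac:(lia).
  by move: L_sum; rewrite sum_a_nil; lia.
move: (L_legal) L_below L_sum => /legalb_consP [x_gt0 L'_legal L'_below] /andP [le_xi _].
rewrite sum_a_cons; have [lt_xi | ge_xi] := ltnP x i.
  have := legal_sum_lt_rec i_gt0 a_rec L_legal (below_trans lt_xi (below_cons L_legal)).
  by rewrite sum_a_cons; lia.
have eq_xi : x = i by lia.
subst x; have t_gt0 := window_start_gt0 i.
by have := legal_sum_lt_rec t_gt0 (rec_upto_window_start i_gt0 a_rec) L'_legal L'_below; lia.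
Qed.

(* Otherwise [i] followed by a decomposition of [a_{i+1} - a_i < a_t] would
   decompose [a_{i+1}] below [i+1]. *)
Lemma gen_succ_geq i : 0 < i -> rec_upto i -> a i + a (window_start i) <= a i.+1.
Proof.
move=> i_gt0 a_rec; rewrite leqNgt; apply/negP => lt_rec.
apply: (gen_undecomposable (ltn0Sn i)).
have [lt_a | le_a] := ltnP (a i.+1) (a i).
  have [L [? L_below ?]] := legal_decomp_rec i_gt0 a_rec lt_a.
  by exists L; split=> //; apply: below_trans L_below.
have [L [L_legal L_below L_sum]] := legal_decomp_rec (window_start_gt0 i)
  (rec_upto_window_start i_gt0 a_rec) (m := a i.+1 - a i) ltac:(lia).
have iL_legal : legalb (i :: L) by apply/legalb_consP.
by exists (i :: L); split; [ | exact: below_cons | rewrite sum_a_cons L_sum; lia].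
Qed.

Lemma gen_rec i : 0 < i -> a i.+1 = a i + a (window_start i).
Proof.
elim/ltn_ind: i => i IH i_gt0.
have a_rec : rec_upto i by move=> j /andP [? ?]; apply: IH.
by apply/eqP; rewrite eqn_leq gen_succ_leq ?gen_succ_geq.
Qed.

Lemma legal_sum_lt i L : 0 < i -> legalb L -> below i L -> sum_a L < a i.
Proof. by move=> i_gt0; apply: legal_sum_lt_rec => // j /andP [j_gt0 _]; apply: gen_rec. Qed.

Lemma legal_sum_bounds x L : legalb (x :: L) -> a x <= sum_a (x :: L) < a x.+1.
Proof.
move=> xL_legal; rewrite sum_a_cons leq_addr /= -sum_a_cons.
exact: legal_sum_lt (below_cons xL_legal).
Qed.

Lemma legal_sum_inj L1 L2 : legalb L1 -> legalb L2 -> sum_a L1 = sum_a L2 -> L1 = L2.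
Proof.
have cons_gt0 x L : legalb (x :: L) -> 0 < sum_a (x :: L).
  by move=> /legalb_consP [/gen_gt0 ? _ _]; rewrite sum_a_cons; lia.
elim: L1 L2 => [|x L1 IH] [|y L2] //.
- by move=> _ /cons_gt0; rewrite sum_a_nil; lia.
- by move=> /cons_gt0; rewrite sum_a_nil; lia.
move=> xL1_legal yL2_legal eq_sum.
have bounds1 := legal_sum_bounds xL1_legal; have bounds2 := legal_sum_bounds yL2_legal.
have [lt_xy | lt_yx | eq_xy] := ltngtP x y.
- by have := gen_leq (ltn0Sn x) lt_xy; lia.
- by have := gen_leq (ltn0Sn y) lt_yx; lia.
subst y; move: xL1_legal yL2_legal eq_sum.
by move=> /legalb_consP [_ L1_legal _] /legalb_consP [_ L2_legal _] /eqP;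
  rewrite !sum_a_cons eqn_add2l => /eqP /(IH _ L1_legal L2_legal) ->.
Qed.

Lemma below_of_sum_lt i L : 0 < i -> legalb L -> sum_a L < a i -> below i L.
Proof.
case: L => [//|x L] i_gt0 xL_legal lt_sum.
have lt_xi : x < i.
  by rewrite ltnNge; apply/negP => /(gen_leq i_gt0); have := legal_sum_bounds xL_legal; lia.
exact: below_trans lt_xi (below_cons xL_legal).
Qed.

(** * Counting bin gaps *)

Variable dec : nat -> seq nat.
Hypothesis dec_legal : forall m, 0 < m -> legal_decomp s b a (dec m) m.

Definition decomp m := if m == 0 then [::] else dec m.

Lemma dec_decomp m : 0 < m -> dec m = decomp m.
Proof. by rewrite /decomp lt0n => /negPf ->. Qed.

Lemma decomp_legal m : legalb (decomp m).
Proof. by rewrite /decomp; case: eqP => [// | /eqP]; rewrite -lt0n => /dec_legal [/legalP]. Qed.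

Lemma decomp_sum m : sum_a (decomp m) = m.
Proof. by rewrite /decomp; case: eqP => [-> | /eqP]; rewrite ?sum_a_nil // -lt0n => /dec_legal []. Qed.

Lemma decompE L m : legalb L -> sum_a L = m -> decomp m = L.
Proof. by move=> L_legal L_sum; apply: legal_sum_inj; rewrite ?decomp_legal ?decomp_sum. Qed.

Lemma decomp_cons i m : 0 < i -> m < a (window_start i) -> decomp (a i + m) = i :: decomp m.
Proof.
move=> i_gt0 lt_m; apply: decompE; last by rewrite sum_a_cons decomp_sum.
apply/legalb_consP; split; rewrite ?decomp_legal //.
by apply: below_of_sum_lt; rewrite ?decomp_legal ?decomp_sum ?window_start_gt0.
Qed.

Lemma decomp_eq_nil m : (decomp m == [::]) = (m == 0).
Proof.
apply/eqP/eqP => [m_nil | ->]; last by [].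
by rewrite -(decomp_sum m) m_nil sum_a_nil.
Qed.

Lemma decomp_head m : 0 < m -> decomp m = head 0 (decomp m) :: behead (decomp m).
Proof. by rewrite lt0n -decomp_eq_nil; case: (decomp m). Qed.

Lemma sum_decomp_top i (F : seq nat -> nat) : 0 < i ->
  \sum_(a i <= m < a i.+1) F (decomp m) = \sum_(0 <= m < a (window_start i)) F (i :: decomp m).
Proof.
move=> i_gt0; rewrite (gen_rec i_gt0) -{1}(add0n (a i)) big_addn addKn.
by apply: eq_big_nat => m /andP [_ lt_m]; rewrite addnC decomp_cons.
Qed.

Definition a_bin k := a (b * k + 1).

Lemma a_bin0 : a_bin 0 = 1.
Proof. by rewrite /a_bin muln0 gen1. Qed.

Lemma a_bin_mono : {homo a_bin : j k / j <= k}.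
Proof. by move=> j k le_jk; apply: gen_leq; [lia | rewrite leq_add2r leq_mul2l le_jk orbT]. Qed.

Lemma a_bin_gt0 k : 0 < a_bin k.
Proof. by rewrite -a_bin0 a_bin_mono. Qed.

Lemma bin_head_leq m k : 0 < m -> (bin b (head 0 (decomp m)) <= k) = (m < a_bin k).
Proof.
move=> m_gt0; rewrite bin_leq.
move: (decomp_legal m) (decomp_sum m); rewrite (decomp_head m_gt0).
set x := head 0 _ => xL_legal xL_sum.
have /legalb_consP [x_gt0 _ _] := xL_legal.
have := legal_sum_bounds xL_legal; rewrite xL_sum => m_bd.
rewrite /a_bin; apply/idP/idP => /= [le_x | lt_m].
  have le_x1 : x.+1 <= b * k + 1 by lia.
  by have := gen_leq (ltn0Sn x) le_x1; lia.
rewrite leqNgt; apply/negP => lt_x.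
have le_x1 : b * k + 1 <= x by lia.
by have := gen_leq (leq_addl _ _) le_x1; lia.
Qed.

Definition gap_count g L := count_mem g (bin_gaps b L).

Lemma gap_count_cons g x L : gap_count g (x :: L) =
  ((L != [::]) && (bin b x - bin b (head 0 L) == g)) + gap_count g L.
Proof. by case: L. Qed.

Lemma first_gap_eq g i m : s < g -> m < a (window_start i) ->
  (decomp m != [::]) && (bin b i - bin b (head 0 (decomp m)) == g) =
  (a_bin (bin b i - g).-1 <= m < a_bin (bin b i - g)).
Proof.
move=> lt_sg lt_m; rewrite decomp_eq_nil.
have [-> | m_gt0] := posnP m.
  by have := a_bin_mono (leq0n (bin b i - g).-1); rewrite a_bin0; lia.
have := decomp_legal m; rewrite {1}(decomp_head m_gt0) => /legalb_consP [y_gt0 _ _].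
have : below (window_start i) (decomp m).
  by apply: below_of_sum_lt; rewrite ?decomp_legal ?decomp_sum ?window_start_gt0.
rewrite {1}(decomp_head m_gt0) => /andP [].
rewrite ltn_window_start // /far [a_bin _ <= m]leqNgt -!(bin_head_leq _ m_gt0) => far_iy _.
by have := bin_gt0 y_gt0; lia.
Qed.

Lemma sum_indicator_range lo hi X : lo <= hi <= X ->
  \sum_(0 <= m < X) (lo <= m < hi) = hi - lo.
Proof.
move=> /andP [le_lo_hi le_hi_X].
rewrite (big_cat_nat (n := lo)) ?(leq_trans le_lo_hi) // (big_cat_nat (m := lo) (n := hi)) //=.
rewrite big1_seq => [|m /andP [_]]; last by rewrite mem_index_iota; lia.
rewrite add0n [X in _ + X]big1_seq => [|m /andP [_]]; last by rewrite mem_index_iota; lia.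
rewrite (eq_big_nat _ _ (F2 := fun=> 1)) => [|m]; last by lia.
by rewrite sum_nat_const_nat; lia.
Qed.

Definition gaps_upto g i := \sum_(0 <= m < a i) gap_count g (decomp m).

(* The decompositions of the [m] in [[a_i, a_{i+1})] are [i] followed by those
   of [m - a_i < a_t], and the new first gap is [g] exactly when the top summand
   of [m - a_i] lies in bin [bin i - g]. *)
Lemma gaps_uptoS g i : 0 < i -> s < g -> gaps_upto g i.+1 =
  gaps_upto g i + gaps_upto g (window_start i) +
  (a_bin (bin b i - g) - a_bin (bin b i - g).-1).
Proof.
move=> i_gt0 lt_sg; set k := bin b i - g.
rewrite /gaps_upto (big_cat_nat (n := a i)) //= ?gen_leq // -addnA sum_decomp_top //.
congr (_ + _).
under eq_big_nat => m /andP [_ lt_m] do rewrite gap_count_cons first_gap_eq //.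
rewrite big_split addnC /= sum_indicator_range // a_bin_mono ?leq_pred //=.
apply: gen_leq; first by rewrite addn1.
by rewrite /window_start leq_add2r leq_mul2l /k; lia.
Qed.

Lemma block_step (Y : nat -> nat) z k :
  (forall r, r < b -> Y (b * k + 1 + r).+1 = Y (b * k + 1 + r) + z) ->
  Y (b * k.+1 + 1) = Y (b * k + 1) + b * z.
Proof.
move=> Y_step.
have Y_lin r : r <= b -> Y (b * k + 1 + r) = Y (b * k + 1) + r * z.
  elim: r => [|r IH] le_rb; first by rewrite !addn0.
  by rewrite addnS Y_step // IH ?mulSn; lia.
by rewrite -Y_lin // mulnS; congr Y; lia.
Qed.

Lemma a_binS k : a_bin k.+1 = a_bin k + b * a_bin (k - s).
Proof.
by apply: block_step => r lt_rb; rewrite gen_rec ?window_start_block //; lia.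
Qed.

Lemma a_bin_Cseq k : a_bin k = Cseq s b k.
Proof.
elim/ltn_ind: k => -[_ | k IH]; first by rewrite a_bin0.
by rewrite a_binS CseqS !IH //; lia.
Qed.

Lemma gaps_upto_Wseq g k : s < g -> gaps_upto g (b * k + 1) = Wseq s b (k - g).
Proof.
move=> lt_sg; elim/ltn_ind: k => -[_ | k IH].
  by rewrite muln0 /gaps_upto gen1 big_nat1.
have gaps_step : gaps_upto g (b * k.+1 + 1) =
    gaps_upto g (b * k + 1) + b * (Wseq s b (k - s - g) + (a_bin (k.+1 - g) - a_bin (k.+1 - g).-1)).
  apply: block_step => r lt_rb.
  by rewrite gaps_uptoS ?window_start_block ?bin_block ?IH -?addnA //; lia.
rewrite gaps_step IH //; case: (leqP g k) => [le_gk | lt_kg].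
  have -> : k - s - g = k - g - s by lia.
  by rewrite subSn // a_binS /= addKn WseqS !a_bin_Cseq mulnDr mulnA addnA.
have [-> [-> ->]] : k.+1 - g = 0 /\ k - g = 0 /\ k - s - g = 0 by lia.
by rewrite subnn Wseq0 muln0.
Qed.

Lemma legal_bin_gaps_gt L : legalb L -> all (fun g => s < g) (bin_gaps b L).
Proof.
elim: L => [|x [|y L] IH] //= /legalb_consP [_ yL_legal /andP [lt_yt _]].
have /legalb_consP [y_gt0 _ _] := yL_legal.
by rewrite IH // andbT; move: lt_yt; rewrite ltn_window_start // /far; lia.
Qed.

Lemma bin_gaps_ltn L n : all (fun x => bin b x <= n) L -> all (fun g => g < n.+1) (bin_gaps b L).
Proof. by elim: L => [|x [|y L] IH] //= /and3P [le_x le_y le_L]; rewrite IH ?le_y //=; lia. Qed.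

Lemma sum_count_mem_nat l N : all (fun g => g < N) l ->
  \sum_(0 <= g < N) count_mem g l = size l.
Proof.
elim: l => [_ | x l IH /= /andP [lt_xN /IH <-]]; first by rewrite big1.
rewrite -[RHS]add1n -[1](subSnn x) -(@sum_indicator_range x x.+1 N) ?leqnSn //.
by rewrite -big_split; apply: eq_bigr => g _ /=; rewrite ltnS -eqn_leq.
Qed.

Lemma block_gap_count g k :
  \sum_(a_bin k <= m < a_bin k.+1) gap_count g (dec m) =
  if s < g then Wseq s b (k.+1 - g) - Wseq s b (k - g) else 0.
Proof.
under eq_big_nat => m /andP [le_m _] do rewrite dec_decomp ?(leq_trans (a_bin_gt0 k) le_m) //.
case: ifP => lt_sg.
  rewrite -!gaps_upto_Wseq // /gaps_upto -/(a_bin k) -/(a_bin k.+1).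
  by rewrite (big_cat_nat (m := 0) (n := a_bin k) (p := a_bin k.+1)) ?a_bin_mono //= addKn.
rewrite big1_seq // => m _; apply/count_memPn; apply: contraFN lt_sg => g_in.
exact: allP (legal_bin_gaps_gt (decomp_legal m)) g g_in.
Qed.

(* Summing [block_gap_count] over all gap sizes [g <= k+1] telescopes. *)
Lemma block_gap_total k :
  \sum_(a_bin k <= m < a_bin k.+1) size (bin_gaps b (dec m)) = Wseq s b (k - s).
Proof.
under eq_big_nat => m /andP [le_m lt_m].
  have m_below : below (b * k.+1 + 1) (dec m).
    rewrite dec_decomp ?(leq_trans (a_bin_gt0 k) le_m) //.
    by apply: below_of_sum_lt; [rewrite addn1 | exact: decomp_legal | rewrite decomp_sum].
  rewrite -(@sum_count_mem_nat _ k.+2); last first.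
    by apply: bin_gaps_ltn; apply: sub_all m_below => x; rewrite addn1 ltnS bin_leq.
  over.
rewrite exchange_big_nat /=.
under eq_big_nat => g _ do rewrite block_gap_count.
rewrite (big_cat_nat (n := minn s.+1 k.+2)) ?geq_minr ?geq_minl //=.
rewrite big1_seq => [|g /andP [_]]; last by rewrite mem_index_iota; case: ifP; lia.
set f := fun g => Wseq s b k.+1 - Wseq s b (k.+1 - g).
rewrite add0n (eq_big_nat _ _ (F2 := fun g => f g.+1 - f g)) => [|g /andP [le_g lt_g]]; last first.
  have := @Wseq_mono s b (k - g) (k.+1 - g); have := @Wseq_mono s b (k.+1 - g) k.+1.
  by rewrite /f subSS; case: ifP; lia.
rewrite telescope_sumn /f => [|m n le_mn]; last by rewrite leq_sub2l // Wseq_mono // leq_sub2l.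
have -> : k.+1 - k.+2 = 0 by lia.
by rewrite Wseq0 subn0 subKn ?Wseq_mono ?leq_subr //; congr Wseq; lia.
Qed.

End Generacci.

Local Open Scope classical_set_scope.
Local Open Scope ring_scope.

(** * Averaging recurrences *)

Section AbsPartialSums.
Variable R : realType.

Definition abs_psum (e : nat -> R) i := \sum_(k < i.+1) `|e k|.

Lemma abs_psum_ge0 e i : 0 <= abs_psum e i.
Proof. exact: sumr_ge0. Qed.

Lemma abs_psumS e i : abs_psum e i.+1 = abs_psum e i + `|e i.+1|.
Proof. exact: big_ord_recr. Qed.

Lemma abs_psum_mono e : {homo abs_psum e : m n / (m <= n)%N >-> m <= n}.
Proof. by apply: (homo_leq (@lexx _ R) le_trans) => i; rewrite abs_psumS lerDl. Qed.

Lemma abs_psum_avg_cvg0 e : e @ \oo --> 0 -> (fun i => abs_psum e i / i.+1%:R) @ \oo --> 0.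
Proof.
move=> e_cvg0; have : (fun k => `|e k|) @ \oo --> 0 by apply/norm_cvg0P.
move=> /cesaro; apply: cvg_trans; apply: near_eq_cvg; near=> i.
by rewrite /arithmetic_mean /= seriesEnat /= big_mkord /abs_psum mulrC.
Unshelve. all: by end_near.
Qed.

End AbsPartialSums.

Section Averaging.
Variables (R : realType) (p : R) (s : nat).
Hypotheses (p_gt0 : 0 < p) (p_lt1 : p < 1).

Definition averaging (x : nat -> R) :=
  forall j, x (j + s.+1)%N = p * x (j + s)%N + (1 - p) * x j.

(* Each term is a convex combination of two earlier ones plus [e], so errors
   accumulate at most additively. *)
Lemma averaging_err_bounds (x e : nat -> R) lo hi :
  (forall j, x (j + s.+1)%N = p * x (j + s)%N + (1 - p) * x j + e (j + s.+1)%N) ->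
  (forall i, (i <= s)%N -> lo <= x i <= hi) ->
  forall i, lo - abs_psum e i <= x i <= hi + abs_psum e i.
Proof.
move=> x_rec x_init; elim/ltn_ind => i IH.
have [le_is | lt_si] := leqP i s.
  by have := x_init i le_is; have := abs_psum_ge0 e i; lra.
rewrite -(subnK lt_si); set j := (i - s.+1)%N.
have /andP [lo_j hi_j] := IH j ltac:(rewrite /j; lia).
have /andP [lo_js hi_js] := IH (j + s)%N ltac:(rewrite /j; lia).
have le_psum := abs_psum_mono e (leq_addr s j).
rewrite x_rec addnS abs_psumS -addnS.
have /andP [lo_e hi_e] : - `|e (j + s.+1)%N| <= e (j + s.+1)%N <= `|e (j + s.+1)%N|.
  by rewrite -ler_norml.
have q_ge0 : 0 <= 1 - p by rewrite subr_ge0 ltW.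
have := ler_wpM2l (ltW p_gt0) hi_js; have := ler_wpM2l (ltW p_gt0) lo_js.
have : (1 - p) * x j <= (1 - p) * (hi + abs_psum e (j + s)) by apply: ler_wpM2l => //; lra.
have : (1 - p) * (lo - abs_psum e (j + s)) <= (1 - p) * x j by apply: ler_wpM2l => //; lra.
by move=> *; apply/andP; split; lra.
Qed.

Lemma averaging_bounds x lo hi : averaging x ->
  (forall i, (i <= s)%N -> lo <= x i <= hi) -> forall i, lo <= x i <= hi.
Proof.
move=> x_avg x_init i.
have x_rec j : x (j + s.+1)%N = p * x (j + s)%N + (1 - p) * x j + (fun=> 0) (j + s.+1)%N.
  by rewrite x_avg addr0.
have := @averaging_err_bounds x (fun=> 0) lo hi x_rec x_init i.
by rewrite /abs_psum big1 ?subr0 ?addr0 // => k _; rewrite normr0.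
Qed.

Lemma averaging_shift x k : averaging x -> averaging (fun i => x (k + i)%N).
Proof. by move=> x_avg j; rewrite !addnA x_avg. Qed.

Lemma averaging_opp x : averaging x -> averaging (fun i => - x i).
Proof. by move=> x_avg j; rewrite x_avg; ring. Qed.

Lemma averaging_lower_gain x lo hi : averaging x ->
  (forall i, (i <= s)%N -> lo <= x i <= hi) ->
  forall k, p ^+ k * (x s - lo) <= x (s + k)%N - lo.
Proof.
move=> x_avg x_init; elim=> [|k IH]; first by rewrite expr0 mul1r addn0.
have /andP [lo_k _] := averaging_bounds x_avg x_init k.
have := ler_wpM2l (ltW p_gt0) IH.
have : 0 <= (1 - p) * (x k - lo) by apply: mulr_ge0; rewrite subr_ge0 // ltW.
have -> : (s + k.+1 = k + s.+1)%N by lia.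
by rewrite x_avg (addnC k s) exprS -mulrA; lra.
Qed.

Local Notation alpha := (p ^+ s.+1).

(* Every term of the next window gives weight at least [p ^+ s.+1] to [x s]. *)
Lemma averaging_window x lo hi : averaging x ->
  (forall i, (i <= s)%N -> lo <= x i <= hi) ->
  forall i, (i <= s)%N ->
  lo + alpha * (x s - lo) <= x (i + s.+1)%N <= hi - alpha * (hi - x s).
Proof.
move=> x_avg x_init i le_is.
have le_alpha : alpha <= p ^+ i.+1 by apply: ler_wiXn2l; rewrite ?ltW.
have /andP [lo_s hi_s] := x_init s (leqnn s).
have lo_gain := averaging_lower_gain x_avg x_init i.+1.
have neg_init j : (j <= s)%N -> - hi <= - x j <= - lo.
  by move=> /x_init /andP [lo_j hi_j]; rewrite !lerN2 hi_j lo_j.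
have hi_gain := averaging_lower_gain (averaging_opp x_avg) neg_init i.+1.
have -> : (i + s.+1 = s + i.+1)%N by lia.
have : alpha * (x s - lo) <= p ^+ i.+1 * (x s - lo) by apply: ler_wpM2r; lra.
have : alpha * (- x s - - hi) <= p ^+ i.+1 * (- x s - - hi) by apply: ler_wpM2r; lra.
by move=> *; apply/andP; split; lra.
Qed.

Lemma averaging_contract x lo hi : averaging x ->
  (forall i, (i <= s)%N -> lo <= x i <= hi) ->
  forall k, exists lo' hi', hi' - lo' = (1 - alpha) ^+ k * (hi - lo) /\
    forall i, lo' <= x (k * s.+1 + i)%N <= hi'.
Proof.
move=> x_avg x_init; elim=> [|k [lo' [hi' [eq_width x_bd]]]].
  by exists lo, hi; split=> [|i]; rewrite ?expr0 ?mul1r // mul0n; apply: averaging_bounds.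
set y := fun i => x (k * s.+1 + i)%N.
have y_avg : averaging y := averaging_shift _ x_avg.
have y_init i : (i <= s)%N -> lo' <= y i <= hi' by move=> _; apply: x_bd.
exists (lo' + alpha * (y s - lo')), (hi' - alpha * (hi' - y s)); split.
  by rewrite [(1 - alpha) ^+ _]exprS -mulrA -eq_width; ring.
apply: averaging_bounds (averaging_shift _ x_avg) _ => i le_is.
have -> : (k.+1 * s.+1 + i = k * s.+1 + (i + s.+1))%N by rewrite mulSn; lia.
by move: (averaging_window y_avg y_init le_is).
Qed.

Lemma averaging_cvg x lo hi : averaging x ->
  (forall i, (i <= s)%N -> lo <= x i <= hi) -> cvgn x /\ lo <= limn x.
Proof.
move=> x_avg x_init.
have alpha_gt0 : 0 < alpha by apply: exprn_gt0.
have alpha_le1 : alpha <= 1 by apply: exprn_ile1; apply: ltW.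
have x_bd := averaging_bounds x_avg x_init.
have x_cvg : cvgn x.
  apply/cauchy_cvgP/cauchy_exP => e e_gt0.
  have le_lo_hi : 0 <= hi - lo by have := x_init 0%N (leq0n s); lra.
  have tol_gt0 : 0 < e / (hi - lo + 1) by apply: divr_gt0 => //; lra.
  have q_lt1 : `|1 - alpha| < 1 by rewrite ger0_norm; lra.
  have /cvgrPdist_lt /(_ _ tol_gt0) [N _ N_small] := cvg_expr q_lt1.
  have [lo' [hi' [eq_width x_bd']]] := averaging_contract x_avg x_init N.
  exists (x (N * s.+1)%N), (N * s.+1)%N => // n /= le_n.
  have /andP [lo_N hi_N] := x_bd' 0%N; rewrite addn0 in lo_N hi_N.
  have /andP [lo_n hi_n] := x_bd' (n - N * s.+1)%N; rewrite subnKC // in lo_n hi_n.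
  have pow_ge0 : 0 <= (1 - alpha) ^+ N by apply: exprn_ge0; lra.
  have := N_small N (leqnn N); rewrite sub0r normrN ger0_norm // ltr_pdivlMr; last lra.
  have : (1 - alpha) ^+ N * (hi - lo) <= (1 - alpha) ^+ N * (hi - lo + 1).
    by apply: ler_wpM2l => //; lra.
  by rewrite /ball /= ltr_norml; move=> *; apply/andP; split; lra.
split=> //.
apply: limr_ge => //; near=> n.
by have /andP [] := x_bd n.
Unshelve. all: by end_near.
Qed.

Lemma averaging_err_avg_cvg0 (x e : nat -> R) :
  (forall j, x (j + s.+1)%N = p * x (j + s)%N + (1 - p) * x j + e (j + s.+1)%N) ->
  e @ \oo --> 0 -> (fun i => x i / i.+1%:R) @ \oo --> 0.
Proof.
move=> x_rec e_cvg0; set M := \sum_(k < s.+1) `|x k|.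
have x_init i : (i <= s)%N -> - M <= x i <= M.
  move=> le_is; rewrite -ler_norml /M (bigD1 (Ordinal (le_is : (i < s.+1)%N))) //= lerDl.
  exact: sumr_ge0.
set h := fun i => M * i.+1%:R^-1 + abs_psum e i / i.+1%:R.
have h_cvg0 : h @ \oo --> 0.
  rewrite -(addr0 0) -{1}(mulr0 M); apply: cvgD; last exact: abs_psum_avg_cvg0.
  by apply: cvgM; [exact: cvg_cst | exact: cvg_harmonic].
apply: (@squeeze_cvgr _ _ _ _ (fun i => - h i) h); last 2 first.
- by rewrite -oppr0; apply: cvgN.
- exact: h_cvg0.
near=> i; rewrite -ler_norml normrM normfV normr_nat /h /= -mulrDl ler_pM2r ?invr_gt0 ?ltr0n //.
by have := averaging_err_bounds x_rec x_init i; rewrite ler_norml opprD; lra.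
Unshelve. all: by end_near.
Qed.

End Averaging.

(** * Growth of the gap counts *)

Lemma cvg_shift_ratio (R : realType) (u : nat -> R) (c K : R) i :
  c != 0 -> K != 0 -> (fun n => u n / (n.+1%:R * c ^+ n)) @ \oo --> K ->
  (fun n => u (n + i)%N / u n) @ \oo --> c ^+ i.
Proof.
move=> c_neq0 K_neq0; set v := fun n => _ => v_cvg.
have ratioE n : u (n + i)%N / u n = v (n + i)%N / v n * ((n + i).+1%:R / n.+1%:R) * c ^+ i.
  have [un0 | un_neq0] := eqVneq (u n) 0; first by rewrite /v /= un0 mul0r !invr0 !mulr0 !mul0r.
  by rewrite /v /= exprD; field; rewrite un_neq0 !expf_neq0 // -natrD !nat1r !pnatr_eq0.
have growth_cvg : (fun n => (n + i).+1%:R / n.+1%:R) @ \oo --> (1 : R).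
  have growthE n : (n + i).+1%:R / n.+1%:R = 1 + i%:R * n.+1%:R^-1 :> R.
    by rewrite -addSn natrD mulrDl divff ?pnatr_eq0.
  rewrite (eq_fun growthE) -[X in _ --> X]addr0 -(mulr0 i%:R).
  by apply: cvgD; [exact: cvg_cst | apply: cvgM; [exact: cvg_cst | exact: cvg_harmonic]].
suff : (fun n => v (n + i)%N / v n * ((n + i).+1%:R / n.+1%:R) * c ^+ i) @ \oo -->
    K / K * 1 * c ^+ i by rewrite divff // !mul1r (eq_fun ratioE).
apply: cvgM; last exact: cvg_cst.
apply: cvgM => //; apply: cvgM; last exact: cvgV.
by rewrite (cvg_shiftn i v (nbhs K)).
Qed.

Section GrowthRate.
Variables (R : realType) (s b : nat) (rho : R).
Hypotheses (b_gt0 : (0 < b)%N) (rho_gt1 : 1 < rho) (rho_root : rho ^+ s.+1 = rho ^+ s + b%:R).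

Local Notation p := rho^-1.

Lemma rho_gt0 : 0 < rho.
Proof. exact: lt_trans rho_gt1. Qed.

Lemma rhoX_neq0 k : rho ^+ k != 0.
Proof. by rewrite expf_neq0 // gt_eqF // rho_gt0. Qed.

Lemma inv_rho_gt0 : 0 < p.
Proof. by rewrite invr_gt0 rho_gt0. Qed.

Lemma inv_rho_lt1 : p < 1.
Proof. by rewrite invf_lt1 // rho_gt0. Qed.

Lemma one_sub_inv_rho : 1 - p = b%:R / rho ^+ s.+1.
Proof.
have -> : b%:R = rho ^+ s.+1 - rho ^+ s :> R by rewrite rho_root addrAC subrr add0r.
by rewrite exprS; field; rewrite rhoX_neq0 gt_eqF // rho_gt0.
Qed.

Definition Cnorm k := (Cseq s b k)%:R / rho ^+ k.

Lemma Cnorm_averaging : averaging p s Cnorm.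
Proof.
move=> j; rewrite /Cnorm addnS CseqS addnK one_sub_inv_rho natrD natrM exprS exprD exprS.
by field; rewrite !rhoX_neq0 gt_eqF // rho_gt0.
Qed.

Lemma Cnorm_cvg : cvgn Cnorm /\ rho ^- s <= limn Cnorm.
Proof.
apply: (averaging_cvg inv_rho_gt0 inv_rho_lt1 Cnorm_averaging (hi := (Cseq s b s)%:R)).
move=> i le_is; have rhoi_gt0 : 0 < rho ^+ i by rewrite exprn_gt0 // rho_gt0.
have rhoi_ge1 : 1 <= rho ^+ i by rewrite exprn_ege1 // ltW.
have le_C : (Cseq s b i)%:R <= (Cseq s b s)%:R :> R by rewrite ler_nat Cseq_mono.
apply/andP; split.
  apply: (@le_trans _ _ (rho ^- i)).
    by rewrite lef_pV2 ?qualifE /= ?exprn_gt0 ?rho_gt0 // ler_eXn2l.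
  by rewrite /Cnorm ler_pdivlMr // mulVf ?rhoX_neq0 // ler1n Cseq_gt0.
rewrite /Cnorm ler_pdivrMr // (le_trans le_C) //.
by rewrite -[X in X <= _]mulr1 ler_wpM2l.
Qed.

Definition Clim := limn Cnorm.

Definition Wnorm k := (Wseq s b k)%:R / rho ^+ k.

Lemma Wnorm_rec j : Wnorm (j + s.+1)%N =
  p * Wnorm (j + s)%N + (1 - p) * Wnorm j + (1 - p) * b%:R * Cnorm j.
Proof.
rewrite /Wnorm /Cnorm addnS WseqS addnK one_sub_inv_rho !natrD !natrM exprS exprD exprS.
by field; rewrite !rhoX_neq0 gt_eqF // rho_gt0.
Qed.

(* [k |-> slope * k] solves the recurrence of [Wnorm] with [Cnorm] replaced by [Clim]. *)
Definition slope := (1 - p) * b%:R * Clim / (1 + s%:R * (1 - p)).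

Lemma slope_gt0 : 0 < slope.
Proof.
have q_gt0 : 0 < 1 - p by rewrite subr_gt0 inv_rho_lt1.
have [_ Clim_ge] := Cnorm_cvg.
have Clim_gt0 : 0 < Clim by apply: lt_le_trans Clim_ge; rewrite invr_gt0 exprn_gt0 // rho_gt0.
rewrite /slope divr_gt0 ?mulr_gt0 ?ltr0n //.
have : 0 <= s%:R * (1 - p) by rewrite mulr_ge0 // ltW.
lra.
Qed.

Definition Wdev k := Wnorm k - slope * k%:R.

Lemma Wdev_avg_cvg0 : (fun k => Wdev k / k.+1%:R) @ \oo --> 0.
Proof.
pose e i := (1 - p) * b%:R * (Cnorm (i - s.+1) - Clim).
apply: (@averaging_err_avg_cvg0 R p s inv_rho_gt0 inv_rho_lt1 Wdev e).
  have den_gt0 : 0 < rho + s%:R * (rho - 1).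
    have : 0 <= s%:R * (rho - 1) by rewrite mulr_ge0 // subr_ge0 ltW.
    by have := rho_gt0; lra.
  move=> j; rewrite /Wdev /e Wnorm_rec addnK !natrD -natr1 /slope.
  by field; rewrite !gt_eqF ?rho_gt0.
rewrite -(mulr0 ((1 - p) * b%:R)) -(subrr Clim) /e.
apply: cvgM; first exact: cvg_cst.
apply: cvgB; last exact: cvg_cst.
by rewrite (cvg_centern s.+1 Cnorm (nbhs Clim)); case: Cnorm_cvg.
Qed.

Lemma Wseq_asymptotic : (fun k => (Wseq s b k)%:R / (k.+1%:R * rho ^+ k)) @ \oo --> slope.
Proof.
have WE k : (Wseq s b k)%:R / (k.+1%:R * rho ^+ k) = Wdev k / k.+1%:R + slope * (1 - k.+1%:R^-1).
  rewrite /Wdev /Wnorm -natr1; field.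
  by rewrite rhoX_neq0 natr1 pnatr_eq0.
suff : (fun k => Wdev k / k.+1%:R + slope * (1 - k.+1%:R^-1)) @ \oo --> 0 + slope * (1 - 0).
  by rewrite subr0 mulr1 add0r (eq_fun WE).
apply: cvgD; first exact: Wdev_avg_cvg0.
apply: cvgM; first exact: cvg_cst.
by apply: cvgB; [exact: cvg_cst | exact: cvg_harmonic].
Qed.

Lemma Wseq_gap_ratio_cvg d :
  (fun J => (Wseq s b J.+1 - Wseq s b J)%:R / (Wseq s b (J + d.+1))%:R) @ \oo -->
  b%:R / rho ^+ (d + s.+1).
Proof.
pose u k := (Wseq s b k)%:R : R.
have ratio_cvg i : (fun J => u (J.+1 + i)%N / u J.+1) @ \oo --> rho ^+ i.
  rewrite (cvg_shiftS (fun J => u (J + i)%N / u J)).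
  by apply: (cvg_shift_ratio _ _ Wseq_asymptotic); rewrite gt_eqF ?slope_gt0 ?rho_gt0.
have ratioE J : (Wseq s b J.+2 - Wseq s b J.+1)%:R / u (J.+1 + d.+1)%N =
    (u (J.+1 + 1)%N / u J.+1 - 1) / (u (J.+1 + d.+1)%N / u J.+1).
  have W_neq0 k : (Wseq s b k.+1)%:R != 0 :> R by rewrite pnatr_eq0 -lt0n Wseq_gt0.
  by rewrite natrB ?Wseq_mono // /u addn1 addnS; field; rewrite !W_neq0.
have -> : b%:R / rho ^+ (d + s.+1) = (rho ^+ 1 - 1) / rho ^+ d.+1.
  have -> : b%:R = rho ^+ s * (rho - 1) by rewrite mulrBr mulr1 -exprSr rho_root addrAC subrr add0r.
  by rewrite expr1 addnS !exprSr exprD; field; rewrite !rhoX_neq0 gt_eqF ?rho_gt0.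
rewrite -(cvg_shiftS (fun J => (Wseq s b J.+1 - Wseq s b J)%:R / u (J + d.+1)%N)) (eq_fun ratioE).
by apply: cvgM; [apply: cvgB; [exact: ratio_cvg | exact: cvg_cst] | apply: cvgV; rewrite ?rhoX_neq0].
Qed.

End GrowthRate.

Lemma exists_root_ge1 (R : realType) (s b : nat) : (0 < b)%N ->
  exists2 x : R, 1 <= x & x ^+ ((s + 1) * b) - x ^+ (s * b) - b%:R = 0.
Proof.
move=> b_gt0; pose f (x : R) := x ^+ ((s + 1) * b) - x ^+ (s * b) - b%:R.
have f1_le0 : f 1 <= 0 by rewrite /f !expr1n subrr sub0r oppr_le0.
have f2_ge0 : 0 <= f 2.
  have : (2 ^ (s * b) + b <= 2 ^ ((s + 1) * b))%N.
    rewrite mulnDl mul1n expnD.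
    have : (2 ^ (s * b) * b.+1 <= 2 ^ (s * b) * 2 ^ b)%N by rewrite leq_mul2l ltn_expl ?orbT.
    by have := expn_gt0 2 (s * b); nia.
  by move=> le_pow; rewrite /f -!natrX subr_ge0 -natrB ?ler_nat; lia.
have f_cont : {within `[1, 2], continuous f}.
  apply: continuous_subspaceT => x; apply: cvgB; last exact: cvg_cst.
  by apply: cvgB; apply: exprn_continuous.
have f_range : Num.min (f 1) (f 2) <= 0 <= Num.max (f 1) (f 2).
  by rewrite ge_min f1_le0 le_max f2_ge0 orbT.
have [x x_in fx0] := IVT (ler1n R 2) f_cont f_range.
by exists x => //; move: x_in; rewrite in_itv /= => /andP [].
Qed.

Lemma max_root_pow (R : realType) (s b : nat) (lam : R) : (0 < b)%N ->
  lam ^+ ((s + 1) * b) - lam ^+ (s * b) - b%:R = 0 ->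
  (forall x : R, x ^+ ((s + 1) * b) - x ^+ (s * b) - b%:R = 0 -> x <= lam) ->
  1 < lam ^+ b /\ (lam ^+ b) ^+ s.+1 = (lam ^+ b) ^+ s + b%:R.
Proof.
move=> b_gt0 lam_root lam_max.
have [x x_ge1 x_root] := exists_root_ge1 R s b_gt0.
have lam_ge1 : 1 <= lam ^+ b by rewrite exprn_ege1 // (le_trans x_ge1) ?lam_max.
have rho_root : (lam ^+ b) ^+ s.+1 = (lam ^+ b) ^+ s + b%:R.
  by rewrite -!exprM mulnC [(b * s)%N]mulnC -addn1; lra.
split=> //; rewrite lt_neqAle lam_ge1 andbT; apply/eqP => rho_eq1.
have : 0 < b%:R :> R by rewrite ltr0n.
by move: rho_root; rewrite -rho_eq1 !expr1n; lra.
Qed.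

Lemma Pn_block (R : realType) s b a dec g k : (0 < b)%N -> is_generacci s b a ->
  (forall m : nat, (0 < m)%N -> legal_decomp s b a (dec m) m) ->
  Pn R b a dec g k.+1 =
  (if (s < g)%N then Wseq s b (k.+1 - g) - Wseq s b (k - g) else 0)%N%:R / (Wseq s b (k - s))%:R.
Proof.
move=> b_gt0 a_gen dec_legal; rewrite /Pn /= -[(k * b).+1]addn1 -[(k.+1 * b).+1]addn1 !(mulnC _ b).
by rewrite (block_gap_count b_gt0 a_gen dec_legal) (block_gap_total b_gt0 a_gen dec_legal).
Qed.

Unset Implicit Arguments.

Theorem theorem1p15 (R : realType) (s b : nat) (a : nat -> nat)
    (dec : nat -> seq nat) (lam : R) :
  (1 <= s)%N -> (1 <= b)%N ->
  is_generacci s b a ->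
  (forall m : nat, (0 < m)%N -> legal_decomp s b a (dec m) m) ->
  lam ^+ ((s + 1) * b) - lam ^+ (s * b) - b%:R = 0 ->
  (forall x : R, x ^+ ((s + 1) * b) - x ^+ (s * b) - b%:R = 0 -> x <= lam) ->
  exists P : nat -> R,
    (forall g : nat, Pn R b a dec g n @[n --> \oo] --> P g) /\
    (forall g : nat, (g < s + 1)%N -> P g = 0) /\
    (forall g : nat, (s + 1 <= g)%N -> P g = b%:R * (lam ^+ b) ^- g).
Proof.
move=> _ b_gt0 a_gen dec_legal lam_root lam_max.
have [rho_gt1 rho_root] := max_root_pow b_gt0 lam_root lam_max.
have PnE g k := @Pn_block R s b a dec g k b_gt0 a_gen dec_legal.
exists (fun g => if (s < g)%N then b%:R * (lam ^+ b) ^- g else 0).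
split; last by split=> g g_bd; [rewrite ifN | rewrite ifT] => //; lia.
move=> g; have [lt_sg | le_gs] := ltnP s g; last first.
  rewrite -(cvg_shiftS (Pn R b a dec g)); under eq_fun do rewrite PnE ltnNge le_gs mul0r.
  exact: cvg_cst.
have [d ->] : exists d, g = (d + s.+1)%N by exists (g - s.+1)%N; rewrite subnK.
have PnJ J : Pn R b a dec (d + s.+1) (J + (d + s.+2)) =
    (Wseq s b J.+1 - Wseq s b J)%:R / (Wseq s b (J + d.+1))%:R.
  have -> : (J + (d + s.+2) = (J + (d + s.+1)).+1)%N by lia.
  rewrite PnE ifT; last lia.
  have -> : (J + (d + s.+1) - s = J + d.+1)%N by lia.
  by rewrite -addSn !addnK.
rewrite -(cvg_shiftn (d + s.+2) (Pn R b a dec _)) (eq_fun PnJ).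
exact: Wseq_gap_ratio_cvg.
Qed.
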